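(* Let $Y$ be a real Banach space, $X$ a closed subspace of $Y$ and $Q:Y\to Y/X$ the quotient map. Let $(B_n)_{n\ge1}$ be a uniformly bounded sequence of bounded operators on $Y$ such that $\lim_{n\to\infty}\|QB_n|_X\|_{X\to Y/X}=0$ and $\limsup_{n\to\infty}\|B_n|_X\|_{X\to Y}\le1$. Then for every $\delta>0$ there is an infinite subset $\mathbb M\subseteq\mathbb N$ such that for all $k\ge1$ and all $n_1<n_2<\dots<n_k$ in $\mathbb M$, $$\|(B_{n_1}B_{n_2}\cdots B_{n_k})|_X\|_{X\to Y}<1+\delta.$$
   Context: For an operator $B$ on $Y$, $\|B|_X\|_{X\to Y}$ denotes the norm of its restriction to $X$. *)

From Stdlib Require Import Reals Lra List Sorted.
Open Scope R_scope.

Record Banach := {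
  car :> Type;
  vadd : car -> car -> car;
  vopp : car -> car;
  vzero : car;
  vscal : R -> car -> car;
  vnorm : car -> R;
  vadd_assoc : forall x y z, vadd x (vadd y z) = vadd (vadd x y) z;
  vadd_comm : forall x y, vadd x y = vadd y x;
  vadd_0 : forall x, vadd x vzero = x;
  vadd_opp : forall x, vadd x (vopp x) = vzero;
  vscal_1 : forall x, vscal 1 x = x;
  vscal_assoc : forall a b x, vscal a (vscal b x) = vscal (a * b) x;
  vscal_distr_v : forall a x y, vscal a (vadd x y) = vadd (vscal a x) (vscal a y);
  vscal_distr_r : forall a b x, vscal (a + b) x = vadd (vscal a x) (vscal b x);
  vnorm_nonneg : forall x, 0 <= vnorm x;
  vnorm_eq0 : forall x, vnorm x = 0 -> x = vzero;
  vnorm_scal : forall a x, vnorm (vscal a x) = Rabs a * vnorm x;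
  vnorm_triangle : forall x y, vnorm (vadd x y) <= vnorm x + vnorm y;
  vcomplete : forall u : nat -> car,
    (forall eps, eps > 0 -> exists N, forall m n, (m >= N)%nat -> (n >= N)%nat ->
        vnorm (vadd (u m) (vopp (u n))) < eps) ->
    exists l, forall eps, eps > 0 -> exists N, forall n, (n >= N)%nat ->
        vnorm (vadd (u n) (vopp l)) < eps
}.

Arguments vadd {_}. Arguments vopp {_}. Arguments vzero {_}.
Arguments vscal {_}. Arguments vnorm {_}.

Definition vsub {Y : Banach} (x y : Y) : Y := vadd x (vopp y).

Definition closed_subspace (Y : Banach) (X : Y -> Prop) : Prop :=
  X vzero /\
  (forall x y, X x -> X y -> X (vadd x y)) /\
  (forall a x, X x -> X (vscal a x)) /\
  (forall (u : nat -> Y) (l : Y), (forall n, X (u n)) ->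
     (forall eps, eps > 0 -> exists N, forall n, (n >= N)%nat -> vnorm (vsub (u n) l) < eps) ->
     X l).

Definition bounded_operator (Y : Banach) (T : Y -> Y) : Prop :=
  (forall x y, T (vadd x y) = vadd (T x) (T y)) /\
  (forall a x, T (vscal a x) = vscal a (T x)) /\
  (exists C, forall y, vnorm (T y) <= C * vnorm y).

Definition restr_norm_le (Y : Banach) (X : Y -> Prop) (T : Y -> Y) (c : R) : Prop :=
  forall x, X x -> vnorm (T x) <= c * vnorm x.

(* ||Q y||_{Y/X} <= c where ||Q y|| = inf_{z in X} ||y - z|| (quotient norm). *)
Definition quot_norm_le (Y : Banach) (X : Y -> Prop) (y : Y) (c : R) : Prop :=
  forall eta, eta > 0 -> exists z, X z /\ vnorm (vsub y z) <= c + eta.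

Definition quot_restr_norm_le (Y : Banach) (X : Y -> Prop) (T : Y -> Y) (c : R) : Prop :=
  forall x, X x -> quot_norm_le Y X (T x) (c * vnorm x).

(* Composition B_{n1} B_{n2} ... B_{nk} for the list [n1; ...; nk]. *)
Definition comp_list {Y : Banach} (B : nat -> Y -> Y) (l : list nat) : Y -> Y :=
  fold_right (fun n f => fun y => B n (f y)) (fun y => y) l.

From Stdlib Require Import Reals List Sorted Lra Lia Psatz ClassicalEpsilon.
Open Scope R_scope.

(* Call a vector y "(a, e)-near X" if y = z + w with z in X,
   ||z|| <= a and ||w|| <= e.  If T is bounded by C on Y, ||T|_X|| <= 1 + eps and
   ||Q T|_X|| < eps, then T maps an (a, e)-near vector to a ((1 + 2 eps) a,
   eps a + C e)-near one: T z is eps ||z||-close to some z' in X, and the old error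
   w is mapped to T w.  We fix a geometric error budget indexed by levels j
   (tolerances eps_j, X-part norms a_j = 1 + th/2^j, errors e_j = th/(2C)^j)
   compatible with this recursion, and select a subsequence m_j such that B (m j)
   meets the level-j tolerances.  By induction on the number of factors, every
   increasing product of the B (m j) whose indices start at level i maps x in X
   to an (a_i ||x||, e_i ||x||)-near vector; at level 0 this gives
   ||product x|| <= (a_0 + e_0) ||x|| = (1 + 2 th) ||x|| with th = min(1, delta/4). *)

Section VectorAlgebra.
Variable Y : Banach.

Lemma vadd_0_l (x : Y) : vadd vzero x = x.
Proof. rewrite vadd_comm; apply vadd_0. Qed.

Lemma vadd_idem_0 (s : Y) : vadd s s = s -> s = vzero.
Proof.
  intros Hs; transitivity (vadd s (vadd s (vopp s))).
  - rewrite vadd_opp, vadd_0; reflexivity.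
  - rewrite vadd_assoc, Hs, vadd_opp; reflexivity.
Qed.

Lemma vscal_0 (x : Y) : vscal 0 x = vzero.
Proof.
  apply vadd_idem_0; rewrite <- vscal_distr_r; f_equal; ring.
Qed.

Lemma vopp_unique (x w : Y) : vadd x w = vzero -> w = vopp x.
Proof.
  intros Hw; rewrite <- (vadd_0 _ w), <- (vadd_opp _ x), vadd_assoc,
    (vadd_comm _ w x), Hw, vadd_0_l; reflexivity.
Qed.

Lemma vopp_scal (x : Y) : vopp x = vscal (-1) x.
Proof.
  symmetry; apply vopp_unique; rewrite <- (vscal_1 _ x) at 1.
  rewrite <- vscal_distr_r; replace (1 + -1) with 0 by ring; apply vscal_0.
Qed.

Lemma vnorm_0 : vnorm (@vzero Y) = 0.
Proof. rewrite <- (vscal_0 vzero), vnorm_scal, Rabs_R0; ring. Qed.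

Lemma vnorm_sub_diag (x : Y) : vnorm (vsub x x) = 0.
Proof. unfold vsub; rewrite vadd_opp; apply vnorm_0. Qed.

Lemma vadd_sub_cancel (z y : Y) : vadd z (vsub y z) = y.
Proof.
  unfold vsub; rewrite (vadd_comm _ y), vadd_assoc, vadd_opp, vadd_0_l; reflexivity.
Qed.

Lemma vsub_chain (y w z : Y) : vadd (vsub y w) (vsub w z) = vsub y z.
Proof.
  unfold vsub; rewrite vadd_assoc, <- (vadd_assoc _ y), (vadd_comm _ (vopp w)),
    vadd_opp, vadd_0; reflexivity.
Qed.

Lemma vnorm_sub_sym (y z : Y) : vnorm (vsub y z) = vnorm (vsub z y).
Proof.
  assert (Hopp : vsub z y = vopp (vsub y z)).
  { apply vopp_unique; rewrite vsub_chain; apply vnorm_eq0, vnorm_sub_diag. }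
  rewrite Hopp, vopp_scal, vnorm_scal, Rabs_left by lra; ring.
Qed.

Lemma vnorm_le_sub (y z : Y) : vnorm y <= vnorm z + vnorm (vsub y z).
Proof. rewrite <- (vadd_sub_cancel z y) at 1; apply vnorm_triangle. Qed.

Lemma linear_0 (T : Y -> Y) :
  (forall a x, T (vscal a x) = vscal a (T x)) -> T vzero = vzero.
Proof. intros Hscal; rewrite <- (vscal_0 vzero), Hscal, !vscal_0; reflexivity. Qed.

Lemma linear_sub (T : Y -> Y) :
  (forall x y, T (vadd x y) = vadd (T x) (T y)) ->
  (forall a x, T (vscal a x) = vscal a (T x)) ->
  forall x y, T (vsub x y) = vsub (T x) (T y).
Proof. intros Hadd Hscal x y; unfold vsub; rewrite Hadd, !vopp_scal, Hscal; reflexivity. Qed.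
End VectorAlgebra.

Definition near_subspace (Y : Banach) (X : Y -> Prop) (y : Y) (a e : R) : Prop :=
  exists z, X z /\ vnorm z <= a /\ vnorm (vsub y z) <= e.

Lemma near_subspace_weaken (Y : Banach) (X : Y -> Prop) (y : Y) (a e a' e' : R) :
  a <= a' -> e <= e' -> near_subspace Y X y a e -> near_subspace Y X y a' e'.
Proof. intros Ha He [z (Hz & Hza & Hze)]; exists z; repeat split; auto; lra. Qed.

Lemma near_subspace_norm_le (Y : Banach) (X : Y -> Prop) (y : Y) (a e : R) :
  near_subspace Y X y a e -> vnorm y <= a + e.
Proof. intros [z (_ & Hz & Hdist)]; pose proof (vnorm_le_sub _ y z); lra. Qed.

Section OneStep.
Variables (Y : Banach) (X : Y -> Prop) (T : Y -> Y) (C eps : R).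
Hypothesis X0 : X vzero.
Hypothesis T_add : forall x y, T (vadd x y) = vadd (T x) (T y).
Hypothesis T_scal : forall a x, T (vscal a x) = vscal a (T x).
Hypothesis T_bounded : forall y, vnorm (T y) <= C * vnorm y.
Hypothesis C_ge0 : 0 <= C.
Hypothesis eps_gt0 : 0 < eps.
Hypothesis T_restr : restr_norm_le Y X T (1 + eps).
Hypothesis T_quot : quot_restr_norm_le Y X T (eps / 2).

(* Since ||Q T|_X|| <= eps/2 < eps, every T z with z in X is eps ||z||-close to X
   (with no additive slack; the case z = 0 is handled by linearity). *)
Lemma quot_witness (z : Y) :
  X z -> exists z', X z' /\ vnorm (vsub (T z) z') <= eps * vnorm z.
Proof.
  intros Hz; destruct (Rle_lt_or_eq_dec 0 _ (vnorm_nonneg _ z)) as [Hpos | Hzero].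
  - destruct (T_quot z Hz (eps / 2 * vnorm z)) as [z' [Hz' Hdist]].
    { apply Rmult_lt_0_compat; lra. }
    exists z'; split; [exact Hz' | lra].
  - apply eq_sym, vnorm_eq0 in Hzero; subst z.
    exists vzero; split; [exact X0|].
    rewrite (linear_0 _ T T_scal), vnorm_sub_diag, vnorm_0; lra.
Qed.

(* One application of T: the X-part grows by a factor 1 + 2 eps, while the error
   becomes eps a (new distance to X) plus C e (image of the old error). *)
Lemma near_subspace_step (y : Y) (a e : R) :
  near_subspace Y X y a e ->
  near_subspace Y X (T y) ((1 + 2 * eps) * a) (eps * a + C * e).
Proof.
  intros [z (Hz & Hza & Hze)].
  destruct (quot_witness z Hz) as [z' [Hz' Hdist]].
  assert (Hz0 : 0 <= vnorm z) by apply vnorm_nonneg.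
  assert (HTz : vnorm (T z) <= (1 + eps) * vnorm z) by (apply T_restr, Hz).
  exists z'; repeat split; [exact Hz' | |].
  - pose proof (vnorm_le_sub _ z' (T z)) as Htri.
    rewrite vnorm_sub_sym in Htri; nra.
  - rewrite <- (vsub_chain _ (T y) (T z) z'), <- (linear_sub _ T T_add T_scal).
    pose proof (vnorm_triangle _ (T (vsub y z)) (vsub (T z) z')).
    pose proof (T_bounded (vsub y z)); nra.
Qed.
End OneStep.

(* With 0 < th <= 1 and C >= 1, a product of operators indexed from
   j on is controlled with X-part norm [budget_norm j] and error [budget_err j],
   provided the j-th operator is within [budget_tol j] of being a contraction on X
   and of leaving X invariant. *)
Section Budget.
Variables th C : R.
Hypothesis th_pos : 0 < th <= 1.
Hypothesis C_ge1 : 1 <= C.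

Definition budget_norm (j : nat) : R := 1 + th / 2 ^ j.
Definition budget_err (j : nat) : R := th / (2 * C) ^ j.
Definition budget_tol (j : nat) : R := budget_err j / 8.

Lemma budget_err_pos (j : nat) : 0 < budget_err j.
Proof. apply Rdiv_lt_0_compat; [lra | apply pow_lt; lra]. Qed.

Lemma budget_tol_pos (j : nat) : 0 < budget_tol j.
Proof. pose proof (budget_err_pos j); unfold budget_tol; lra. Qed.

Lemma budget_norm_bounds (j : nat) : 1 <= budget_norm j <= 2.
Proof.
  assert (H2j : 1 <= 2 ^ j) by (apply pow_R1_Rle; lra).
  assert (Hq : 0 < th / 2 ^ j <= th).
  { split; [apply Rdiv_lt_0_compat; lra|].
    apply Rmult_le_reg_r with (2 ^ j); [lra|]; field_simplify; nra. }
  unfold budget_norm; lra.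
Qed.

(* The error of level j is at most th/2^j, so the norm budget absorbs it. *)
Lemma budget_err_le (j : nat) : budget_err j <= th / 2 ^ j.
Proof.
  assert (H2j : 0 < 2 ^ j) by (apply pow_lt; lra).
  assert (HCj : 1 <= C ^ j) by (apply pow_R1_Rle; lra).
  unfold budget_err; rewrite Rpow_mult_distr.
  apply Rmult_le_reg_r with (2 ^ j * C ^ j); [nra|]; field_simplify; nra.
Qed.

Lemma budget_level0 : budget_norm 0 + budget_err 0 = 1 + 2 * th.
Proof. unfold budget_norm, budget_err; simpl; field. Qed.

Lemma budget_norm_step (j : nat) :
  (1 + 2 * budget_tol j) * budget_norm (S j) <= budget_norm j.
Proof.
  pose proof (budget_err_le j); pose proof (budget_tol_pos j).
  pose proof (budget_norm_bounds (S j)).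
  assert (Hhalf : budget_norm j = budget_norm (S j) + th / 2 ^ S j).
  { unfold budget_norm; simpl; field; apply pow_nonzero; lra. }
  assert (Hsplit : th / 2 ^ j = 2 * (th / 2 ^ S j)).
  { simpl; field; apply pow_nonzero; lra. }
  unfold budget_tol in *; nra.
Qed.

Lemma budget_err_step (j : nat) :
  budget_tol j * budget_norm (S j) + C * budget_err (S j) <= budget_err j.
Proof.
  pose proof (budget_err_pos j); pose proof (budget_norm_bounds (S j)).
  assert (Hhalf : C * budget_err (S j) = budget_err j / 2).
  { unfold budget_err; simpl; field; split; [apply pow_nonzero|]; lra. }
  unfold budget_tol; nra.
Qed.

Lemma budget_norm_antitone (i j : nat) : (i <= j)%nat -> budget_norm j <= budget_norm i.
Proof.
  intros Hij; apply (decreasing_prop budget_norm), Hij; intros n.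
  pose proof (budget_norm_step n); pose proof (budget_tol_pos n).
  pose proof (budget_norm_bounds (S n)); nra.
Qed.

Lemma budget_err_antitone (i j : nat) : (i <= j)%nat -> budget_err j <= budget_err i.
Proof.
  intros Hij; apply (decreasing_prop budget_err), Hij; intros n.
  pose proof (budget_err_step n); pose proof (budget_tol_pos n).
  pose proof (budget_norm_bounds (S n)); pose proof (budget_err_pos (S n)); nra.
Qed.
End Budget.

Fixpoint subseq (N : nat -> nat) (j : nat) : nat :=
  match j with
  | O => S (N O)
  | S k => S (Nat.max (subseq N k) (N (S k)))
  end.

Lemma subseq_ge (N : nat -> nat) (j : nat) :
  (N j <= subseq N j)%nat /\ (j < subseq N j)%nat.
Proof. induction j; simpl; lia. Qed.

Lemma subseq_increasing (N : nat -> nat) (j j' : nat) :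
  (j < j')%nat -> (subseq N j < subseq N j')%nat.
Proof. induction 1; simpl; lia. Qed.

Lemma subseq_lt_index (N : nat -> nat) (j j' : nat) :
  (subseq N j < subseq N j')%nat -> (j < j')%nat.
Proof.
  intros Hlt; destruct (Nat.lt_ge_cases j j') as [|Hge]; [assumption|].
  destruct (Nat.eq_dec j j') as [-> | Hne]; [lia|].
  pose proof (subseq_increasing N j' j); lia.
Qed.

Definition indexed_from (m : nat -> nat) (i n : nat) : Prop :=
  exists j, (i <= j)%nat /\ m j = n.

Section Products.
Variables (Y : Banach) (X : Y -> Prop) (B : nat -> Y -> Y) (N : nat -> nat) (th C : R).
Let m := subseq N.
Hypothesis X0 : X vzero.
Hypothesis th_pos : 0 < th <= 1.
Hypothesis C_ge1 : 1 <= C.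
Hypothesis B_add : forall j x y, B (m j) (vadd x y) = vadd (B (m j) x) (B (m j) y).
Hypothesis B_scal : forall j a x, B (m j) (vscal a x) = vscal a (B (m j) x).
Hypothesis B_bounded : forall j y, vnorm (B (m j) y) <= C * vnorm y.
Hypothesis B_restr : forall j, restr_norm_le Y X (B (m j)) (1 + budget_tol th C j).
Hypothesis B_quot : forall j, quot_restr_norm_le Y X (B (m j)) (budget_tol th C j / 2).

Lemma product_near_subspace (l : list nat) (i : nat) (x : Y) :
  Sorted lt l -> Forall (indexed_from m i) l -> X x ->
  near_subspace Y X (comp_list B l x)
    (budget_norm th i * vnorm x) (budget_err th C i * vnorm x).
Proof.
  revert i; induction l as [|n l IH]; intros i Hsorted Hindex Hx.
  - pose proof (budget_norm_bounds th th_pos i).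
    pose proof (budget_err_pos th C th_pos C_ge1 i).
    pose proof (vnorm_nonneg _ x).
    exists x; simpl; rewrite vnorm_sub_diag; repeat split; [exact Hx | nra | nra].
  - inversion Hindex as [|? ? [j [Hij <-]] Htail]; subst.
    assert (Hhead : Forall (lt (m j)) l).
    { apply (Sorted_extends (R := lt)); [intros a b c; lia | exact Hsorted]. }
    assert (Htail' : Forall (indexed_from m (S j)) l).
    { rewrite Forall_forall in *; intros t Ht.
      destruct (Htail t Ht) as [j' [_ Hj']]; exists j'; split; [|exact Hj'].
      apply (subseq_lt_index N); fold m; rewrite Hj'; exact (Hhead t Ht). }
    pose proof (IH (S j) (proj1 (Sorted_inv Hsorted)) Htail' Hx) as Hnear_tail.
    assert (C_ge0 : 0 <= C) by lra.
    pose proof (budget_tol_pos th C th_pos C_ge1 j) as Htol.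
    pose proof (near_subspace_step Y X (B (m j)) C (budget_tol th C j) X0 (B_add j)
      (B_scal j) (B_bounded j) C_ge0 Htol (B_restr j) (B_quot j) _ _ _ Hnear_tail) as Hnear.
    pose proof (vnorm_nonneg _ x).
    pose proof (budget_norm_step th C th_pos C_ge1 j).
    pose proof (budget_err_step th C th_pos C_ge1 j).
    pose proof (budget_norm_antitone th C th_pos C_ge1 i j Hij).
    pose proof (budget_err_antitone th C th_pos C_ge1 i j Hij).
    simpl; eapply near_subspace_weaken; [| | exact Hnear]; nra.
Qed.
End Products.

Lemma common_thresholds (Y : Banach) (X : Y -> Prop) (B : nat -> Y -> Y) (tol : nat -> R) :
  (forall j, 0 < tol j) ->
  (forall eps, eps > 0 -> exists N, forall n, (n >= N)%nat -> (1 <= n)%nat ->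
      quot_restr_norm_le Y X (B n) eps) ->
  (forall eps, eps > 0 -> exists N, forall n, (n >= N)%nat -> (1 <= n)%nat ->
      restr_norm_le Y X (B n) (1 + eps)) ->
  exists N : nat -> nat, forall j n, (N j <= n)%nat -> (1 <= n)%nat ->
    quot_restr_norm_le Y X (B n) (tol j / 2) /\ restr_norm_le Y X (B n) (1 + tol j).
Proof.
  intros Htol Hq Hr; apply (choice (fun j Nj => forall n, (Nj <= n)%nat -> (1 <= n)%nat ->
    quot_restr_norm_le Y X (B n) (tol j / 2) /\ restr_norm_le Y X (B n) (1 + tol j))).
  intros j; pose proof (Htol j).
  destruct (Hq (tol j / 2)) as [Nq HNq]; [lra|].
  destruct (Hr (tol j)) as [Nr HNr]; [lra|].
  exists (Nat.max Nq Nr); intros n Hn Hn1; split; [apply HNq | apply HNr]; lia.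
Qed.

Theorem lemma4p1 (Y : Banach) (X : Y -> Prop) (B : nat -> Y -> Y) :
  closed_subspace Y X ->
  (forall n, (1 <= n)%nat -> bounded_operator Y (B n)) ->
  (* uniformly bounded *)
  (exists C, forall n, (1 <= n)%nat -> forall y, vnorm (B n y) <= C * vnorm y) ->
  (* lim_n ||Q B_n|_X|| = 0 *)
  (forall eps, eps > 0 -> exists N, forall n, (n >= N)%nat -> (1 <= n)%nat ->
      quot_restr_norm_le Y X (B n) eps) ->
  (* limsup_n ||B_n|_X|| <= 1 *)
  (forall eps, eps > 0 -> exists N, forall n, (n >= N)%nat -> (1 <= n)%nat ->
      restr_norm_le Y X (B n) (1 + eps)) ->
  forall delta, delta > 0 ->
  exists M : nat -> Prop,
    (forall m, M m -> (1 <= m)%nat) /\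
    (forall N, exists m, (m >= N)%nat /\ M m) /\
    (forall l : list nat, l <> nil -> Sorted lt l -> Forall M l ->
       exists c, c < 1 + delta /\ restr_norm_le Y X (comp_list B l) c).
Proof.
  intros [X0 _] Hop [C HC] Hq Hr delta Hdelta.
  set (Cb := Rmax C 1); set (th := Rmin 1 (delta / 4)).
  assert (HCb : 1 <= Cb) by apply Rmax_r.
  assert (Hth : 0 < th <= 1) by (split; [apply Rmin_glb_lt | apply Rmin_l]; lra).
  assert (Hth_delta : th <= delta / 4) by apply Rmin_r.
  destruct (common_thresholds Y X B (budget_tol th Cb) (budget_tol_pos th Cb Hth HCb) Hq Hr)
    as [N HN].
  set (m := subseq N).
  assert (Hm : forall j, (N j <= m j)%nat /\ (1 <= m j)%nat)
    by (intros j; pose proof (subseq_ge N j); unfold m; lia).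
  assert (HCbound : forall n, (1 <= n)%nat -> forall y, vnorm (B n y) <= Cb * vnorm y).
  { intros n Hn y; eapply Rle_trans; [apply HC, Hn|].
    apply Rmult_le_compat_r; [apply vnorm_nonneg | apply Rmax_l]. }
  exists (fun n => exists j, m j = n); split; [|split].
  - intros n [j <-]; apply Hm.
  - intros K; exists (m K); split; [|eauto]; pose proof (subseq_ge N K); unfold m; lia.
  - intros l _ Hsorted Hin; exists (1 + 2 * th); split; [lra|]; intros x Hx.
    assert (Hindexed : Forall (indexed_from m 0) l).
    { eapply Forall_impl; [|exact Hin]; intros n [j Hj]; exists j; split; [lia | exact Hj]. }
    assert (Hnear : near_subspace Y X (comp_list B l x)
      (budget_norm th 0 * vnorm x) (budget_err th Cb 0 * vnorm x)).
    { apply (product_near_subspace Y X B N); auto; intros j;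
        destruct (Hm j) as [HmN Hm1].
      - apply (Hop _ Hm1).
      - apply (Hop _ Hm1).
      - apply (HCbound _ Hm1).
      - apply (HN j _ HmN Hm1).
      - apply (HN j _ HmN Hm1). }
    apply near_subspace_norm_le in Hnear.
    rewrite <- (budget_level0 th Cb); lra.
Qed.
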